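(* Let $\mathcal{X},\mathcal{Y},\mathcal{U},\mathcal{Z}$ be finite sets, let $(X,Y)\in\mathcal{X}\times\mathcal{Y}$ have a joint distribution $P_{X,Y}$ of full support on $\mathcal{X}\times\mathcal{Y}$, and let $f:\mathcal{X}\times\mathcal{Y}\to\mathcal{U}$, $g:\mathcal{Y}\to\mathcal{Z}$ be deterministic. Define $j:\mathcal{X}\times\mathcal{Z}\to\mathcal{U}^*$ by $j(x,z)=(f(x,y'))_{y'\in g^{-1}(z)}$ (the word listing the values $f(x,y')$ over $y'\in g^{-1}(z)$ in a fixed order). Then the optimal zero-error rate is $$R^*=H\big(j(X,g(Y))\,\big|\,g(Y)\big).$$
   Context: $\mathcal{U}^*$ denotes the set of finite words over $\mathcal{U}$, and $g^{-1}(z)=\{y\in\mathcal{Y}:g(y)=z\}$. Setting: $(X^n,Y^n)$ denotes $n$ i.i.d. copies of $(X,Y)$. An encoder observes $X^n$ and $(g(Y_t))_{t\le n}$; a decoder observes $Y^n$ and must recover $(f(X_t,Y_t))_{t\le n}$. An $(n,R_n)$-zero-error source code is a pair $\phi_e:\mathcal{X}^n\times\mathcal{Z}^n\to\{0,1\}^*$, $\phi_d:\mathcal{Y}^n\times\{0,1\}^*\to\mathcal{U}^n$ such that $\phi_e(\mathcal{X}^n\times\mathcal{Z}^n)$ is prefix-free, $R_n=\frac1n\mathbb{E}[l(\phi_e(X^n,(g(Y_t))_{t\le n}))]$ ($l$ = length of a binary word), and for all $(x^n,y^n)\in\operatorname{supp}P^n_{X,Y}$, $\phi_d(y^n,\phi_e(x^n,(g(y_t))_{t\le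 n}))=(f(x_t,y_t))_{t\le n}$. A rate $R$ is achievable if some sequence of $(n,R_n)$-zero-error codes has $\lim_n R_n=R$; $R^*$ is the infimum of achievable rates. *)

From HB Require Import structures.
From mathcomp Require Import all_boot all_order all_algebra.
From mathcomp Require Import all_classical all_reals all_analysis.
Set Implicit Arguments. Unset Strict Implicit. Unset Printing Implicit Defensive.
Import Order.TTheory GRing.Theory Num.Theory numFieldNormedType.Exports.
Local Open Scope ring_scope.
Local Open Scope classical_set_scope.

Section Defs.
Variables (R : realType) (X Y U Z : finType).
Variables (P : X -> Y -> R) (f : X -> Y -> U) (g : Y -> Z).

Definition log2 (t : R) : R := ln t / ln 2.

Definition jfun (x : X) (z : Z) : seq U := [seq f x y | y <- enum Y & g y == z].

Definition prob (E : X -> Y -> bool) : R :=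
  \sum_(x : X) \sum_(y : Y) (if E x y then P x y else 0).

(* Conditional entropy H(W | V) (in bits) of random variables W, V defined on
   the sample space X * Y with pmf P:
   H(W|V) = - sum_{x,y} P(x,y) log2 ( P[W = W(x,y), V = V(x,y)] / P[V = V(x,y)] ). *)
Definition cond_entropy (A B : eqType) (W : X -> Y -> A) (V : X -> Y -> B) : R :=
  - \sum_(x : X) \sum_(y : Y)
      P x y * log2 (prob (fun x' y' => (W x' y' == W x y) && (V x' y' == V x y))
                    / prob (fun x' y' => V x' y' == V x y)).

Definition Pn (n : nat) (xn : n.-tuple X) (yn : n.-tuple Y) : R :=
  \prod_(i < n) P (tnth xn i) (tnth yn i).

Definition zero_error_code (n : nat)
    (enc : n.-tuple X -> n.-tuple Z -> seq bool)
    (dec : n.-tuple Y -> seq bool -> n.-tuple U) : Prop :=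
  (forall a b a' b', prefix (enc a b) (enc a' b') -> enc a b = enc a' b') /\
  (forall xn yn, 0 < Pn xn yn ->
     dec yn (enc xn (map_tuple g yn)) = [tuple f (tnth xn i) (tnth yn i) | i < n]).

Definition rate (n : nat) (enc : n.-tuple X -> n.-tuple Z -> seq bool) : R :=
  (n%:R)^-1 * \sum_(xn : n.-tuple X) \sum_(yn : n.-tuple Y)
                 Pn xn yn * (size (enc xn (map_tuple g yn)))%:R.

Definition achievable (r : R) : Prop :=
  exists (enc : forall n, n.-tuple X -> n.-tuple Z -> seq bool)
         (dec : forall n, n.-tuple Y -> seq bool -> n.-tuple U),
    (forall n, zero_error_code (enc n) (dec n)) /\
    (fun n : nat => rate (enc n)) @ \oo --> r.

Definition opt_rate : R := inf [set r : R | achievable r].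

End Defs.

(* Let q(x, z) be the conditional probability, given g(Y) = z, that the
   j-class at z of X is that of x, so that H(j(X, g(Y)) | g(Y)) is
   E[-log2 q(X, g(Y))], and let Q be the n-fold product of q.
   Converse: once z^n is fixed, a zero-error encoder must give different
   codewords to x^n's whose j-classes differ in some coordinate, since the
   decoder may face any y^n above z^n.  Keeping the shortest codeword of each
   class gives a prefix-free family, so Kraft's inequality, summed over z^n,
   yields E[2^-l / Q] <= 1, and ln t <= t - 1 turns this into
   E[l] >= E[-log2 Q] = n H.
   Achievability: send l = floor(-log2 Q) + 1 in a header of O(log n) bits,
   then the index of the class of x^n among the classes with Q >= 2^-l; as the
   Q-values of the classes sum to at most 1, there are at most 2^l of them.
   The rate is then at most H + O(log n) / n. *)

From HB Require Import structures.
From mathcomp Require Import all_boot all_order all_algebra.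
From mathcomp Require Import all_classical all_reals all_analysis.
From mathcomp Require Import zify lra.
Import Order.TTheory GRing.Theory Num.Theory.
Set Implicit Arguments. Unset Strict Implicit. Unset Printing Implicit Defensive.
Local Open Scope classical_set_scope.
Local Open Scope ring_scope.

Section TupleSums.
Variable R : comPzSemiRingType.

Lemma sum_tuple_prod (T : finType) n (F : 'I_n -> T -> R) :
  \sum_(t : n.-tuple T) \prod_(i < n) F i (tnth t i) = \prod_(i < n) \sum_(x : T) F i x.
Proof.
rewrite bigA_distr_bigA /=.
rewrite (reindex (fun h : {ffun 'I_n -> T} => [tuple h i | i < n])) /=.
  by apply: eq_bigr => h _; apply: eq_bigr => i _; rewrite tnth_mktuple.
exists (fun t : n.-tuple T => [ffun i => tnth t i]) => [h _|t _].
  by apply/ffunP => i; rewrite ffunE tnth_mktuple.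
by apply: eq_from_tnth => i; rewrite tnth_mktuple ffunE.
Qed.

Lemma prod_if_forall n (T : Type) (p : 'I_n -> pred T) (F : 'I_n -> T -> R) (t : 'I_n -> T) :
  \prod_(i < n) (if p i (t i) then F i (t i) else 0) =
  if [forall i, p i (t i)] then \prod_(i < n) F i (t i) else 0.
Proof.
case: (boolP [forall i, p i (t i)]) => [/forallP pt | /forallPn [i /negbTE pti]].
  by apply: eq_bigr => i _; rewrite pt.
by rewrite (bigD1 i) //= pti mul0r.
Qed.

Lemma sum_tuple_prod_cond (T : finType) n (p : 'I_n -> pred T) (F : 'I_n -> T -> R) :
  \sum_(t : n.-tuple T | [forall i, p i (tnth t i)]) \prod_(i < n) F i (tnth t i)
  = \prod_(i < n) \sum_(x | p i x) F i x.
Proof.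
rewrite big_mkcond /=.
under eq_bigr do rewrite -(prod_if_forall p F (fun i => tnth _ i)).
rewrite (sum_tuple_prod (fun i x => if p i x then F i x else 0)).
by apply: eq_bigr => i _; rewrite [RHS]big_mkcond.
Qed.

Lemma sum_tuple2_prod (T1 T2 : finType) n (G : 'I_n -> T1 -> T2 -> R) :
  \sum_(s : n.-tuple T1) \sum_(t : n.-tuple T2) \prod_(i < n) G i (tnth s i) (tnth t i)
  = \prod_(i < n) \sum_(x : T1) \sum_(y : T2) G i x y.
Proof.
rewrite -(sum_tuple_prod (fun i x => \sum_y G i x y)).
by apply: eq_bigr => s _; rewrite (sum_tuple_prod (fun i y => G i (tnth s i) y)).
Qed.

End TupleSums.

Fixpoint bits (m k : nat) : seq bool :=
  if m is m'.+1 then odd k :: bits m' k./2 else [::].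

Fixpoint unbits (s : seq bool) : nat :=
  if s is b :: s' then b + (unbits s').*2 else 0.

Lemma size_bits m k : size (bits m k) = m.
Proof. by elim: m k => //= m IH k; rewrite IH. Qed.

Lemma bitsK m k : (k < 2 ^ m)%N -> unbits (bits m k) = k.
Proof.
elim: m k => [|m IH] k /=; first by rewrite expn0; case: k.
rewrite expnS => k_lt; rewrite IH; first by rewrite odd_double_half.
have := odd_double_half k; rewrite -muln2; lia.
Qed.

Section Kraft.
Variable R : realFieldType.

Definition prefix_free (W : seq (seq bool)) :=
  {in W &, forall u v, prefix u v -> u = v}.

Definition branch (b : bool) (W : seq (seq bool)) :=
  [seq behead w | w <- W & head false w == b].

Lemma kraft_nil (W : seq (seq bool)) : uniq W -> prefix_free W -> [::] \in W ->
  \sum_(w <- W) (2^-1 : R) ^+ size w <= 1.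
Proof.
move=> uW pfW nilW.
have sub : {subset W <= [:: [::]]}.
  by move=> w wW; rewrite inE -(pfW [::] w nilW wW) //; case: (w).
have := uniq_leq_size uW sub.
case: W uW pfW nilW sub => [|w [|? ?]] //= _ _ + _ _.
by rewrite mem_seq1 => /eqP <-; rewrite big_seq1 expr0.
Qed.

Section Branch.
Variables (b : bool) (W : seq (seq bool)).
Hypotheses (uW : uniq W) (pfW : prefix_free W) (nilW : [::] \notin W).

Lemma branch_cons w : w \in [seq w <- W | head false w == b] -> w = b :: behead w.
Proof.
rewrite mem_filter => /andP [/eqP hb wW].
case: w hb wW => [|c w] /= hb wW; last by rewrite hb.
by move: nilW; rewrite wW.
Qed.

Lemma branch_uniq : uniq (branch b W).
Proof.
rewrite map_inj_in_uniq ?filter_uniq // => u v hu hv e.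
by rewrite (branch_cons hu) (branch_cons hv) e.
Qed.

Lemma branch_prefix_free : prefix_free (branch b W).
Proof.
move=> _ _ /mapP [u hu ->] /mapP [v hv ->] uv; congr behead.
apply: pfW; [move: hu | move: hv | by rewrite (branch_cons hu) (branch_cons hv) /= eqxx].
  by rewrite mem_filter => /andP [].
by rewrite mem_filter => /andP [].
Qed.

Lemma sum_branch : \sum_(w <- W | head false w == b) (2^-1 : R) ^+ size w =
  2^-1 * \sum_(w <- branch b W) (2^-1 : R) ^+ size w.
Proof.
rewrite -big_filter big_map mulr_sumr big_seq [RHS]big_seq.
by apply: eq_bigr => w hw; rewrite {1}(branch_cons hw) /= exprS.
Qed.

End Branch.

Lemma kraft (W : seq (seq bool)) : uniq W -> prefix_free W ->
  \sum_(w <- W) (2^-1 : R) ^+ size w <= 1.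
Proof.
have [N] : exists N, all (fun w => size w <= N)%N W.
  by exists (\max_(w <- W) size w); apply/allP => w wW; exact: leq_bigmax_seq.
elim: N W => [|N IH] W sizeW uW pfW.
  case: W sizeW uW pfW => [|w W] sizeW uW pfW; first by rewrite big_nil ler01.
  apply: kraft_nil => //; move: sizeW => /= /andP [+ _].
  by rewrite leqn0 size_eq0 => /eqP <-; rewrite mem_head.
have [nilW|nilW] := boolP ([::] \in W); first exact: kraft_nil.
have sizeB c : all (fun w => size w <= N)%N (branch c W).
  apply/allP => _ /mapP [v + ->]; rewrite mem_filter => /andP [_ vW].
  by move/allP: sizeW => /(_ v vW); rewrite size_behead; lia.
have IHb c := IH _ (sizeB c) (branch_uniq c uW nilW) (branch_prefix_free (b := c) pfW nilW).
rewrite (bigID (fun w => head false w == true)) /=.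
have -> : \sum_(w <- W | ~~ (head false w == true)) (2^-1 : R) ^+ size w =
          \sum_(w <- W | head false w == false) (2^-1 : R) ^+ size w.
  by apply: eq_bigl => w; case: (head false w).
rewrite !sum_branch //; move: (IHb true) (IHb false); lra.
Qed.

End Kraft.

Section Log2.
Variable R : realType.

Lemma ln2_gt0 : 0 < ln (2 : R).
Proof. by apply: ln_gt0; rewrite ltr1n. Qed.

Lemma log2_prod n (F : 'I_n -> R) : (forall i, 0 < F i) ->
  log2 (\prod_(i < n) F i) = \sum_(i < n) log2 (F i).
Proof.
move=> F_gt0; rewrite /log2 -mulr_suml; congr (_ / _).
apply: (big_morph_in Num.pos); last by move=> i _; rewrite posrE.
- by move=> x y; rewrite !posrE; exact: mulr_gt0.
- by rewrite posrE.
- by move=> x y xp yp; rewrite lnM.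
- exact: ln1.
Qed.

Lemma ln_expr_half l : ln ((2^-1 : R) ^+ l) = - (l%:R * ln 2).
Proof. by rewrite lnXn ?invr_gt0 // lnV ?posrE // mulNrn mulr_natl. Qed.

Lemma neglog2_le_len (Q : R) (l : nat) : 0 < Q ->
  - log2 Q <= l%:R + ((2^-1) ^+ l / Q - 1) / ln 2.
Proof.
move=> Q_gt0; set t := (2^-1) ^+ l / Q.
have t_gt0 : 0 < t by rewrite divr_gt0 // exprn_gt0 // invr_gt0.
have : ln t <= t - 1 by have := @le_ln1Dx R (t - 1); rewrite addrCA subrr addr0; apply; lra.
rewrite ln_div ?posrE ?exprn_gt0 ?invr_gt0 // ln_expr_half => lnt.
rewrite /log2 -mulNr ler_pdivrMr ?ln2_gt0 // mulrDl divfK ?gt_eqF ?ln2_gt0 //.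
lra.
Qed.

Lemma expr_half_le (Q : R) (l : nat) : 0 < Q -> - log2 Q <= l%:R -> (2^-1) ^+ l <= Q.
Proof.
move=> Q_gt0; rewrite /log2 -mulNr ler_pdivrMr ?ln2_gt0 // => le_l.
by rewrite -ler_ln ?posrE ?exprn_gt0 ?invr_gt0 // ln_expr_half; lra.
Qed.

End Log2.

Section SingleLetter.
Variables (R : realType) (X Y U Z : finType).
Variables (P : X -> Y -> R) (f : X -> Y -> U) (g : Y -> Z).
Hypothesis P_pos : forall x y, 0 < P x y.

Definition pxz x z := \sum_(y | g y == z) P x y.
Definition pz z := \sum_x pxz x z.
Definition pjz x z := \sum_(x' | jfun f g x' z == jfun f g x z) pxz x' z.
Definition q x z :=
  prob P (fun x' y' => (jfun f g x' (g y') == jfun f g x z) && (g y' == z))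
  / prob P (fun _ y' => g y' == z).

Lemma prob_gE (E : X -> Z -> bool) z :
  prob P (fun x y => E x (g y) && (g y == z)) = \sum_(x | E x z) pxz x z.
Proof.
rewrite /prob [RHS]big_mkcond; apply: eq_bigr => x _ /=.
have [Exz|nExz] := boolP (E x z); last first.
  by apply: big1 => y _; case: eqP => [->|]; rewrite ?andbF ?(negbTE nExz).
rewrite /pxz [RHS]big_mkcond; apply: eq_bigr => y _.
by case: eqP => [->|]; rewrite ?andbF ?Exz.
Qed.

Lemma qE x z : q x z = pjz x z / pz z.
Proof.
by rewrite /q (prob_gE (fun x' z' => jfun f g x' z' == jfun f g x z)) (prob_gE (fun _ _ => true)).
Qed.

Lemma pxz_ge0 x z : 0 <= pxz x z.
Proof. by apply: sumr_ge0 => y _; exact: ltW. Qed.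

Lemma pz_ge0 z : 0 <= pz z.
Proof. by apply: sumr_ge0 => x _; exact: pxz_ge0. Qed.

Lemma pjz_ge0 x z : 0 <= pjz x z.
Proof. by apply: sumr_ge0 => x' _; exact: pxz_ge0. Qed.

Lemma pjz_le_pz x z : pjz x z <= pz z.
Proof.
rewrite [leRHS](bigID (fun x' => jfun f g x' z == jfun f g x z)) lerDl.
by apply: sumr_ge0 => x' _; exact: pxz_ge0.
Qed.

Lemma q_ge0 x z : 0 <= q x z.
Proof. by rewrite qE divr_ge0 ?pjz_ge0 ?pz_ge0. Qed.

Lemma q_le1 x z : q x z <= 1.
Proof.
rewrite qE; have [->|pz_neq0] := eqVneq (pz z) 0; first by rewrite invr0 mulr0.
by rewrite ler_pdivrMr ?mul1r ?pjz_le_pz // lt0r pz_neq0 pz_ge0.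
Qed.

Lemma pxz_gt0 x y : 0 < pxz x (g y).
Proof.
rewrite /pxz (bigD1 y) //=; apply: ltr_pwDl => //.
by apply: sumr_ge0 => y' _; exact: ltW.
Qed.

Lemma pjz_gt0 x y : 0 < pjz x (g y).
Proof.
rewrite /pjz (bigD1 x) //=; apply: ltr_pwDl; first exact: pxz_gt0.
by apply: sumr_ge0 => x' _; exact: pxz_ge0.
Qed.

Lemma q_gt0 x y : 0 < q x (g y).
Proof.
rewrite qE divr_gt0 ?pjz_gt0 //.
exact: lt_le_trans (pjz_gt0 x y) (pjz_le_pz _ _).
Qed.

Lemma eq_q_jfun x x' z : jfun f g x z = jfun f g x' z -> q x z = q x' z.
Proof. by move=> jxx'; rewrite /q jxx'. Qed.

Definition rep x z := odflt x [pick x' | jfun f g x' z == jfun f g x z].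

Lemma jfun_rep x z : jfun f g (rep x z) z = jfun f g x z.
Proof. by rewrite /rep; case: pickP => [x' /eqP|] //=. Qed.

Lemma eq_rep x x' z : (rep x z == rep x' z) = (jfun f g x z == jfun f g x' z).
Proof.
apply/eqP/eqP => [rxx'|jxx']; first by rewrite -jfun_rep rxx' jfun_rep.
rewrite /rep.
have -> : [pick u | jfun f g u z == jfun f g x z] = [pick u | jfun f g u z == jfun f g x' z].
  by apply: eq_pick => u; rewrite jxx'.
by case: pickP => //= /(_ x'); rewrite eqxx.
Qed.

Lemma rep_id x z : rep (rep x z) z = rep x z.
Proof. by apply/eqP; rewrite eq_rep jfun_rep. Qed.

Lemma q_rep x z : q (rep x z) z = q x z.
Proof. exact/eq_q_jfun/jfun_rep. Qed.

Lemma f_rep x y : f (rep x (g y)) y = f x y.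
Proof.
have /eq_in_map := jfun_rep x (g y); apply.
by rewrite mem_filter eqxx mem_enum.
Qed.

Lemma sum_class_pxz z r : rep r z = r -> \sum_(x | rep x z == r) pxz x z = pjz r z.
Proof. by move=> rep_r; apply: eq_bigl => x; rewrite -{1}rep_r eq_rep. Qed.

Lemma sum_class_pxz_div_q z r : \sum_(x | rep x z == r) pxz x z / q x z <= pz z.
Proof.
have [rep_r|not_rep] := eqVneq (rep r z) r; last first.
  rewrite big_pred0 ?pz_ge0 // => x; apply/negP => /eqP rep_x.
  by move: not_rep; rewrite -rep_x rep_id eqxx.
rewrite (eq_bigr (fun x => pxz x z / q r z)); last first.
  by move=> x /eqP <-; rewrite q_rep.
rewrite -mulr_suml sum_class_pxz // qE.
have [->|pjz_neq0] := eqVneq (pjz r z) 0; first by rewrite mul0r pz_ge0.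
by rewrite invfM invrK mulrA mulfV // mul1r.
Qed.

Lemma sum_rep_q z : \sum_(x | rep x z == x) q x z <= 1.
Proof.
have [pz0|pz_neq0] := eqVneq (pz z) 0.
  by rewrite big1 ?ler01 // => x _; rewrite qE pz0 invr0 mulr0.
have pz_gt0 : 0 < pz z by rewrite lt0r pz_neq0 pz_ge0.
under eq_bigr do rewrite qE.
rewrite -mulr_suml ler_pdivrMr // mul1r.
suff -> : \sum_(x | rep x z == x) pjz x z = pz z by [].
rewrite /pz [RHS](partition_big (rep^~ z) (fun r => rep r z == r)) /=; last first.
  by move=> x _; rewrite rep_id.
by apply: eq_bigr => r /eqP rep_r; rewrite sum_class_pxz.
Qed.

Definition Hjg := - \sum_x \sum_y P x y * log2 (q x (g y)).

Lemma cond_entropy_jfun :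
  cond_entropy P (fun x y => jfun f g x (g y)) (fun _ y => g y) = Hjg.
Proof. by []. Qed.

End SingleLetter.

Section Blocks.
Variables (R : realType) (X Y U Z : finType).
Variables (P : X -> Y -> R) (f : X -> Y -> U) (g : Y -> Z).
Hypothesis P_pos : forall x y, 0 < P x y.
Hypothesis P_sum1 : \sum_x \sum_y P x y = 1.
Variable n : nat.
Implicit Types (xn r : n.-tuple X) (yn : n.-tuple Y) (zn : n.-tuple Z).

Local Notation q := (q P f g).
Local Notation rep := (rep f g).

Lemma Pn_gt0 xn yn : 0 < Pn P xn yn.
Proof. by apply: prodr_gt0 => i _. Qed.

Lemma Pn_sum1 : \sum_(xn : n.-tuple X) \sum_(yn : n.-tuple Y) Pn P xn yn = 1.
Proof. by rewrite /Pn (sum_tuple2_prod (fun _ => P)) big1. Qed.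

Lemma pz_sum1 : \sum_z pz P g z = 1.
Proof.
rewrite /pz /pxz exchange_big /= -P_sum1; apply: eq_bigr => x _.
by rewrite (partition_big g predT).
Qed.

Lemma expect_coord (h : X -> Y -> R) (i : 'I_n) :
  \sum_(xn : n.-tuple X) \sum_(yn : n.-tuple Y) Pn P xn yn * h (tnth xn i) (tnth yn i)
  = \sum_x \sum_y P x y * h x y.
Proof.
pose G k x y := P x y * (if k == i then h x y else 1).
have PnG xn yn : Pn P xn yn * h (tnth xn i) (tnth yn i) =
                 \prod_(k < n) G k (tnth xn k) (tnth yn k).
  rewrite /Pn /G (bigD1 i) //= [RHS](bigD1 i) //= eqxx mulrAC; congr (_ * _).
  by apply: eq_bigr => k /negbTE ->; rewrite mulr1.
under eq_bigr do under eq_bigr do rewrite PnG.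
rewrite sum_tuple2_prod (bigD1 i) //= [X in _ * X]big1 ?mulr1.
  by apply: eq_bigr => x _; apply: eq_bigr => y _; rewrite /G eqxx.
by move=> k /negbTE k_neq_i; rewrite /G k_neq_i; under eq_bigr do under eq_bigr do rewrite mulr1.
Qed.

Lemma expect_sum (h : X -> Y -> R) :
  \sum_(xn : n.-tuple X) \sum_(yn : n.-tuple Y)
     Pn P xn yn * \sum_(i < n) h (tnth xn i) (tnth yn i)
  = n%:R * \sum_x \sum_y P x y * h x y.
Proof.
under eq_bigr do under eq_bigr do rewrite mulr_sumr.
under eq_bigr do rewrite exchange_big /=.
rewrite exchange_big /=.
under eq_bigr do rewrite expect_coord.
by rewrite sumr_const card_ord mulr_natl.
Qed.

Definition qn xn zn := \prod_(i < n) q (tnth xn i) (tnth zn i).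

Lemma qn_gt0 xn yn : 0 < qn xn (map_tuple g yn).
Proof. by apply: prodr_gt0 => i _; rewrite tnth_map q_gt0. Qed.

Lemma qn_le1 xn zn : qn xn zn <= 1.
Proof. by apply: prodr_ile1 => i _; rewrite q_ge0 ?q_le1. Qed.

Lemma neglog2_qn_ge0 xn zn : 0 <= - log2 (qn xn zn).
Proof.
rewrite /log2 -mulNr divr_ge0 ?oppr_ge0 ?ln_le0 ?qn_le1 //.
exact: ltW (ln2_gt0 R).
Qed.

Lemma log2_qn xn yn :
  log2 (qn xn (map_tuple g yn)) = \sum_(i < n) log2 (q (tnth xn i) (g (tnth yn i))).
Proof.
rewrite /qn log2_prod; last by move=> i; rewrite tnth_map q_gt0.
by apply: eq_bigr => i _; rewrite tnth_map.
Qed.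

Lemma expect_neglog2_qn :
  \sum_(xn : n.-tuple X) \sum_(yn : n.-tuple Y)
     Pn P xn yn * - log2 (qn xn (map_tuple g yn)) = n%:R * Hjg P f g.
Proof.
under eq_bigr do under eq_bigr do rewrite log2_qn -sumrN.
rewrite (expect_sum (fun x y => - log2 (q x (g y)))) /Hjg -sumrN.
by congr (_ * _); apply: eq_bigr => x _; rewrite -sumrN; apply: eq_bigr => y _; rewrite mulrN.
Qed.

Definition repn xn zn := [tuple rep (tnth xn i) (tnth zn i) | i < n].

Lemma repn_eqE xn zn r :
  (repn xn zn == r) = [forall i, rep (tnth xn i) (tnth zn i) == tnth r i].
Proof.
apply/eqP/forallP => [<- i|rep_r]; first by rewrite tnth_mktuple.
by apply: eq_from_tnth => i; rewrite tnth_mktuple; exact/eqP.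
Qed.

Lemma repn_id xn zn : repn (repn xn zn) zn = repn xn zn.
Proof. by apply: eq_from_tnth => i; rewrite !tnth_mktuple rep_id. Qed.

Lemma qn_repn xn zn : qn (repn xn zn) zn = qn xn zn.
Proof. by apply: eq_bigr => i _; rewrite tnth_mktuple q_rep. Qed.

Lemma sum_repn_qn zn : \sum_(r : n.-tuple X | repn r zn == r) qn r zn <= 1.
Proof.
rewrite (eq_bigl _ _ (fun r => repn_eqE r zn r)).
rewrite (sum_tuple_prod_cond (fun i x => rep x (tnth zn i) == x) (fun i x => q x (tnth zn i))).
by apply: prodr_ile1 => i _; rewrite sumr_ge0 ?sum_rep_q // => x _; exact: q_ge0.
Qed.

Lemma sum_class_weight zn r :
  \sum_(xn : n.-tuple X | repn xn zn == r)
     \prod_(i < n) (pxz P g (tnth xn i) (tnth zn i) / q (tnth xn i) (tnth zn i))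
  <= \prod_(i < n) pz P g (tnth zn i).
Proof.
rewrite (eq_bigl _ _ (fun xn => repn_eqE xn zn r)).
rewrite (sum_tuple_prod_cond (fun i x => rep x (tnth zn i) == tnth r i)
           (fun i x => pxz P g x (tnth zn i) / q x (tnth zn i))).
apply: ler_prod => i _; apply/andP; split; last exact: sum_class_pxz_div_q.
by apply: sumr_ge0 => x _; rewrite divr_ge0 ?pxz_ge0 ?q_ge0.
Qed.

End Blocks.

Section Converse.
Variables (R : realType) (X Y U Z : finType).
Variables (P : X -> Y -> R) (f : X -> Y -> U) (g : Y -> Z).
Hypothesis P_pos : forall x y, 0 < P x y.
Hypothesis P_sum1 : \sum_x \sum_y P x y = 1.
Variable n : nat.
Variables (enc : n.-tuple X -> n.-tuple Z -> seq bool)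
          (dec : n.-tuple Y -> seq bool -> n.-tuple U).
Hypothesis code : zero_error_code P f g enc dec.
Implicit Types (xn r : n.-tuple X) (yn : n.-tuple Y) (zn : n.-tuple Z).

Local Notation q := (q P f g).
Local Notation repn := (repn f g).
Local Notation qn := (qn P f g).

Let K xn zn : R := (2^-1) ^+ size (enc xn zn).
Let a x z := pxz P g x z / q x z.

Lemma enc_separates_classes xn xn' yn :
  enc xn (map_tuple g yn) = enc xn' (map_tuple g yn) ->
  repn xn (map_tuple g yn) = repn xn' (map_tuple g yn).
Proof.
move=> enc_eq; apply: eq_from_tnth => i; rewrite !tnth_mktuple tnth_map.
apply/eqP; rewrite eq_rep; apply/eqP/eq_in_map => y.
rewrite mem_filter mem_enum andbT => /eqP gy.
pose yn' := [tuple if k == i then y else tnth yn k | k < n].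
have gyn : map_tuple g yn = map_tuple g yn'.
  apply: eq_from_tnth => k; rewrite !tnth_map tnth_ord_tuple.
  by case: eqP => [->|].
rewrite gyn in enc_eq.
have /(congr1 (fun t => tnth t i)) := code.2 xn yn' (Pn_gt0 P_pos _ _).
rewrite enc_eq (code.2 xn' yn' (Pn_gt0 P_pos _ _)) !tnth_mktuple eqxx.
by move=> ->.
Qed.

Definition shortest zn r :=
  arg_min r (fun xn => repn xn zn == r) (fun xn => size (enc xn zn)).

Lemma shortestP zn r : repn r zn = r ->
  repn (shortest zn r) zn = r /\
  forall xn, repn xn zn = r -> (size (enc (shortest zn r) zn) <= size (enc xn zn))%N.
Proof.
move=> rep_r; rewrite /shortest; case: arg_minnP => [|s /eqP rep_s min_s]; first exact/eqP.
by split=> // xn /eqP; exact: min_s.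
Qed.

Lemma kraft_shortest yn :
  \sum_(r | repn r (map_tuple g yn) == r)
     K (shortest (map_tuple g yn) r) (map_tuple g yn) <= 1.
Proof.
set zn := map_tuple g yn.
rewrite -big_filter -(big_map (fun r => enc (shortest zn r) zn) predT (fun w => (2^-1 : R) ^+ size w)).
apply: kraft.
- rewrite map_inj_in_uniq ?filter_uniq ?index_enum_uniq // => r r'.
  rewrite !mem_filter => /andP [/eqP rep_r _] /andP [/eqP rep_r' _] /enc_separates_classes.
  by rewrite (shortestP rep_r).1 (shortestP rep_r').1.
- by move=> _ _ /mapP [r _ ->] /mapP [r' _ ->]; exact: code.1.
Qed.

Lemma sum_enc_weight zn :
  \sum_(xn : n.-tuple X) K xn zn * \prod_(i < n) a (tnth xn i) (tnth zn i)
  <= \prod_(i < n) pz P g (tnth zn i).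
Proof.
have a_ge0 x z : 0 <= a x z by rewrite divr_ge0 ?pxz_ge0 ?q_ge0.
have [zn_img|/forallPn [i zi_img]] := boolP [forall i, tnth zn i \in codom g]; last first.
  have pxz0 x : pxz P g x (tnth zn i) = 0.
    rewrite /pxz big_pred0 // => y; apply/negP => /eqP gy.
    by move: zi_img; rewrite -gy codom_f.
  rewrite big1 ?prodr_ge0 // => [i' _|xn _]; first exact: pz_ge0.
  by rewrite (bigD1 i) //= /a pxz0 !mul0r mulr0.
have [yn {zn_img}->] : exists yn, zn = map_tuple g yn.
  exists [tuple iinv (forallP zn_img i) | i < n].
  by apply: eq_from_tnth => i; rewrite tnth_map tnth_mktuple f_iinv.
clear zn; set zn := map_tuple g yn; set w := fun xn => \prod_(i < n) a (tnth xn i) (tnth zn i).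
have w_ge0 xn : 0 <= w xn by apply: prodr_ge0.
apply: le_trans (_ : \sum_xn K (shortest zn (repn xn zn)) zn * w xn <= _).
  apply: ler_sum => xn _; apply: ler_wpM2r; first exact: w_ge0.
  apply: ler_wiXn2l; [by [] | by rewrite invf_le1 ?ler1n |].
  exact: (shortestP (repn_id f g xn zn)).2 xn erefl.
rewrite (partition_big (fun xn => repn xn zn) (fun r => repn r zn == r)) /=; last first.
  by move=> xn _; rewrite repn_id.
apply: le_trans (_ : \sum_(r | repn r zn == r)
    K (shortest zn r) zn * \prod_(i < n) pz P g (tnth zn i) <= _).
  apply: ler_sum => r _.
  rewrite (eq_bigr (fun xn => K (shortest zn r) zn * w xn)); last by move=> xn /eqP ->.
  by rewrite -mulr_sumr ler_wpM2l ?exprn_ge0 // sum_class_weight.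
rewrite -mulr_suml ler_piMl ?prodr_ge0 ?kraft_shortest // => i _; exact: pz_ge0.
Qed.

Lemma sum_fiber_weight xn zn :
  \sum_(yn : n.-tuple Y | map_tuple g yn == zn)
     \prod_(i < n) (P (tnth xn i) (tnth yn i) / q (tnth xn i) (g (tnth yn i)))
  = \prod_(i < n) a (tnth xn i) (tnth zn i).
Proof.
rewrite (eq_bigl (fun yn => [forall i, g (tnth yn i) == tnth zn i])); last first.
  move=> yn; apply/eqP/forallP => [<- i|gyn]; first by rewrite tnth_map.
  by apply: eq_from_tnth => i; rewrite tnth_map; exact/eqP.
rewrite (eq_bigr (fun yn => \prod_(i < n) (P (tnth xn i) (tnth yn i) / q (tnth xn i) (tnth zn i))));
  last by move=> yn /forallP gyn; apply: eq_bigr => i _; rewrite (eqP (gyn i)).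
rewrite (sum_tuple_prod_cond (fun i y => g y == tnth zn i)
           (fun i y => P (tnth xn i) y / q (tnth xn i) (tnth zn i))).
by apply: eq_bigr => i _; rewrite /a /pxz mulr_suml.
Qed.

Lemma expect_kraft_ratio :
  \sum_(xn : n.-tuple X) \sum_(yn : n.-tuple Y)
     Pn P xn yn * (K xn (map_tuple g yn) / qn xn (map_tuple g yn)) <= 1.
Proof.
have PnK xn yn : Pn P xn yn * (K xn (map_tuple g yn) / qn xn (map_tuple g yn)) =
    K xn (map_tuple g yn) *
    \prod_(i < n) (P (tnth xn i) (tnth yn i) / q (tnth xn i) (g (tnth yn i))).
  rewrite mulrCA prodf_div; congr (_ * (_ / _)).
  by apply: eq_bigr => i _; rewrite tnth_map.
under eq_bigr do under eq_bigr do rewrite PnK.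
have by_fiber xn :
    \sum_(yn : n.-tuple Y) K xn (map_tuple g yn) *
      \prod_(i < n) (P (tnth xn i) (tnth yn i) / q (tnth xn i) (g (tnth yn i)))
    = \sum_(zn : n.-tuple Z) K xn zn * \prod_(i < n) a (tnth xn i) (tnth zn i).
  rewrite (partition_big (map_tuple g) predT) //=; apply: eq_bigr => zn _.
  rewrite -sum_fiber_weight mulr_sumr; apply: eq_bigr => yn /eqP gyn.
  by rewrite gyn.
under eq_bigr do rewrite by_fiber.
rewrite exchange_big /=; apply: le_trans (ler_sum _ (fun zn _ => sum_enc_weight zn)) _.
by rewrite (sum_tuple_prod (fun _ => pz P g)) big1 // => i _; exact: pz_sum1.
Qed.

Lemma expect_len_ge :
  n%:R * Hjg P f g <= \sum_(xn : n.-tuple X) \sum_(yn : n.-tuple Y)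
                        Pn P xn yn * (size (enc xn (map_tuple g yn)))%:R.
Proof.
pose t xn yn := K xn (map_tuple g yn) / qn xn (map_tuple g yn).
rewrite -(expect_neglog2_qn f g P_pos P_sum1).
apply: le_trans (_ : \sum_(xn : n.-tuple X) \sum_(yn : n.-tuple Y)
    Pn P xn yn * ((size (enc xn (map_tuple g yn)))%:R + (t xn yn - 1) / ln 2) <= _).
  apply: ler_sum => xn _; apply: ler_sum => yn _.
  apply: ler_wpM2l; [exact: ltW (Pn_gt0 P_pos _ _) | exact/neglog2_le_len/qn_gt0].
have gibbs : \sum_(xn : n.-tuple X) \sum_(yn : n.-tuple Y)
    Pn P xn yn * ((t xn yn - 1) / ln 2) <= 0.
  under eq_bigr do under eq_bigr do rewrite mulrA mulrBr mulr1.
  under eq_bigr do rewrite -mulr_suml sumrB.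
  rewrite -mulr_suml sumrB Pn_sum1 // pmulr_lle0 ?invr_gt0 ?ln2_gt0 // subr_le0.
  exact: expect_kraft_ratio.
under eq_bigr do under eq_bigr do rewrite mulrDr.
under eq_bigr do rewrite big_split.
by rewrite big_split /= gerDl.
Qed.

End Converse.

Section Achievability.
Variables (R : realType) (X Y U Z : finType).
Variables (P : X -> Y -> R) (f : X -> Y -> U) (g : Y -> Z).
Hypothesis P_pos : forall x y, 0 < P x y.
Hypothesis P_sum1 : \sum_x \sum_y P x y = 1.
Variables (x0 : X) (c : nat).
Hypothesis neglog2_q_le : forall x y, - log2 (q P f g x (g y)) <= c%:R.
Variable n : nat.
Implicit Types (xn r : n.-tuple X) (yn : n.-tuple Y) (zn : n.-tuple Z).

Local Notation repn := (repn f g).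
Local Notation qn := (qn P f g).

Definition len_max := (n * c).+1.
Definition header_len := (trunc_log 2 len_max).+1.

(* Capped at [len_max] so that it always fits in the header, even off the
   support of [P], where [qn] may vanish. *)
Definition len xn zn := minn (Num.truncn (- log2 (qn xn zn))).+1 len_max.

Definition likely_classes zn l :=
  enum [pred r : n.-tuple X | (repn r zn == r) && ((2^-1) ^+ l <= qn r zn)].

Definition enc_opt xn zn : seq bool :=
  bits header_len (len xn zn) ++
  bits (len xn zn) (index (repn xn zn) (likely_classes zn (len xn zn))).

Definition dec_opt yn (w : seq bool) : n.-tuple U :=
  let l := unbits (take header_len w) in
  let r := nth [tuple x0 | _ < n] (likely_classes (map_tuple g yn) l)
               (unbits (take l (drop header_len w))) in
  [tuple f (tnth r i) (tnth yn i) | i < n].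

Lemma len_lt xn zn : (len xn zn < 2 ^ header_len)%N.
Proof. exact: leq_ltn_trans (geq_minr _ _) (trunc_log_ltn _ _). Qed.

Lemma enc_opt_prefix_free xn zn xn' zn' :
  prefix (enc_opt xn zn) (enc_opt xn' zn') -> enc_opt xn zn = enc_opt xn' zn'.
Proof.
rewrite /enc_opt prefix_catr ?size_bits // => /andP [/eqP bits_eq].
have len_eq : len xn zn = len xn' zn'.
  by rewrite -(bitsK (len_lt xn zn)) bits_eq bitsK ?len_lt.
by rewrite bits_eq prefixE size_bits len_eq take_oversize ?size_bits // => /eqP ->.
Qed.

Lemma size_likely_classes zn l : (size (likely_classes zn l) <= 2 ^ l)%N.
Proof.
rewrite /likely_classes -cardE -(ler_nat R) natrX.
set A := [pred r : n.-tuple X | _].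
have : (2^-1 : R) ^+ l *+ #|A| <= 1.
  rewrite -sumr_const; apply: le_trans (sum_repn_qn f g P_pos zn).
  rewrite [leRHS]big_mkcond [leLHS]big_mkcond /=; apply: ler_sum => r _; rewrite inE.
  case: ifP => [/andP [-> //]|_]; case: ifP => // _.
  by apply: prodr_ge0 => i _; exact: q_ge0.
by rewrite exprVn -mulr_natr mulrC ler_pdivrMr ?exprn_gt0 // mul1r.
Qed.

Lemma neglog2_qn_le xn yn : - log2 (qn xn (map_tuple g yn)) <= (n * c)%:R.
Proof.
rewrite (log2_qn f g P_pos) -sumrN.
apply: le_trans (_ : \sum_(i < n) (c%:R : R) <= _); first by apply: ler_sum.
by rewrite sumr_const card_ord natrM mulr_natl.
Qed.

Lemma len_le xn zn : (len xn zn)%:R <= - log2 (qn xn zn) + 1.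
Proof.
apply: le_trans (_ : (Num.truncn (- log2 (qn xn zn))).+1%:R <= _).
  by rewrite ler_nat geq_minl.
by rewrite -addn1 natrD lerD2r truncn_le (neglog2_qn_ge0 f g P_pos).
Qed.

Lemma neglog2_qn_le_len xn yn :
  - log2 (qn xn (map_tuple g yn)) <= (len xn (map_tuple g yn))%:R.
Proof.
rewrite /len /minn; case: ltnP => _; first exact: ltW (truncnS_gt _).
by apply: le_trans (neglog2_qn_le xn yn) _; rewrite ler_nat.
Qed.

Lemma dec_optK xn yn :
  dec_opt yn (enc_opt xn (map_tuple g yn)) = [tuple f (tnth xn i) (tnth yn i) | i < n].
Proof.
set zn := map_tuple g yn; set l := len xn zn.
have rep_likely : repn xn zn \in likely_classes zn l.
  rewrite mem_enum inE repn_id eqxx qn_repn /=.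
  exact/expr_half_le/neglog2_qn_le_len/qn_gt0.
have index_lt : (index (repn xn zn) (likely_classes zn l) < 2 ^ l)%N.
  by apply: leq_trans (size_likely_classes zn l); rewrite index_mem.
rewrite /dec_opt /enc_opt take_size_cat ?size_bits // bitsK ?len_lt //.
rewrite drop_size_cat ?size_bits // take_oversize ?size_bits // bitsK // nth_index //.
by apply: eq_from_tnth => i; rewrite !tnth_mktuple tnth_map f_rep.
Qed.

Lemma zero_error_code_opt : zero_error_code P f g enc_opt dec_opt.
Proof. by split=> [*|xn yn _]; [exact: enc_opt_prefix_free | exact: dec_optK]. Qed.

Lemma expect_len_opt :
  \sum_(xn : n.-tuple X) \sum_(yn : n.-tuple Y)
     Pn P xn yn * (size (enc_opt xn (map_tuple g yn)))%:R
  <= header_len.+1%:R + n%:R * Hjg P f g.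
Proof.
apply: le_trans (_ : \sum_(xn : n.-tuple X) \sum_(yn : n.-tuple Y)
    (Pn P xn yn * header_len.+1%:R + Pn P xn yn * - log2 (qn xn (map_tuple g yn))) <= _).
  apply: ler_sum => xn _; apply: ler_sum => yn _.
  rewrite -mulrDr; apply: ler_wpM2l; first exact: ltW (Pn_gt0 P_pos _ _).
  rewrite size_cat !size_bits natrD -addn1 natrD -addrA lerD2l addrC.
  exact: len_le.
under eq_bigr do rewrite big_split -mulr_suml.
by rewrite big_split -mulr_suml Pn_sum1 // mul1r expect_neglog2_qn.
Qed.

End Achievability.

Lemma sq_le_exp2 s : (s ^ 2 <= 2 ^ s + 16)%N.
Proof.
have [le4s|] := leqP 4 s; last by case: s => [|[|[|[|]]]].
suff : (s ^ 2 <= 2 ^ s)%N by lia.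
rewrite -(subnK le4s); elim: (s - 4)%N => [//|k IH].
by rewrite addSn (expnS 2); move: IH; set t := (2 ^ (k + 4))%N; nia.
Qed.

Lemma header_len_sq c n : (0 < n)%N -> ((header_len c n).+1 ^ 2 <= n * (4 * c + 20))%N.
Proof.
move=> n_gt0; rewrite /header_len /len_max.
set m := trunc_log 2 (n * c).+1.
have : (2 ^ m <= (n * c).+1)%N by apply: trunc_logP.
have := sq_le_exp2 m.+2; rewrite !expnS; set t := (2 ^ m)%N; nia.
Qed.

Lemma header_rate_cvg0 (R : realType) c :
  (fun n => (header_len c n).+1%:R / n%:R : R) @ \oo --> 0.
Proof.
apply/cvgrPdist_le => e e_gt0; near=> n.
have n_gt0 : (0 < n)%N by near: n; exact: nbhs_infty_gt.
have : (4 * c + 20)%:R / e ^+ 2 <= n%:R :> R by near: n; exact: nbhs_infty_ger.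
rewrite ler_pdivrMr ?exprn_gt0 // => C_le.
have n_pos : 0 < n%:R :> R by rewrite ltr0n.
rewrite sub0r normrN ger0_norm ?divr_ge0 //.
rewrite -(ler_pXn2r (n := 2)) ?nnegrE ?divr_ge0 //; last exact: ltW.
rewrite expr_div_n ler_pdivrMr ?exprn_gt0 //.
apply: le_trans (_ : (n * (4 * c + 20))%:R <= _); first by rewrite -natrX ler_nat header_len_sq.
rewrite natrM; nra.
Unshelve. all: by end_near.
Qed.

Lemma bounded_by_nat (R : realType) (T : finType) (v : T -> R) :
  exists c : nat, forall t, v t <= c%:R.
Proof.
exists (\max_t (Num.truncn (v t)).+1)%N => t.
apply: le_trans (ltW (truncnS_gt (v t))) _.
by rewrite ler_nat (leq_bigmax t).
Qed.

Section Optimality.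
Variables (R : realType) (X Y U Z : finType).
Variables (P : X -> Y -> R) (f : X -> Y -> U) (g : Y -> Z).
Hypothesis P_pos : forall x y, 0 < P x y.
Hypothesis P_sum1 : \sum_x \sum_y P x y = 1.

Lemma inhabited_of_sum1 : inhabited X.
Proof.
case: (pickP (@predT X)) => [x _|X0]; first by constructor.
by move: P_sum1; rewrite big_pred0 // => /eqP; rewrite eq_sym oner_eq0.
Qed.

Lemma rate_ge_Hjg n (enc : n.-tuple X -> n.-tuple Z -> seq bool) dec :
  zero_error_code P f g enc dec -> (0 < n)%N -> Hjg P f g <= rate P g enc.
Proof.
move=> code n_gt0; have n_pos : 0 < n%:R :> R by rewrite ltr0n.
rewrite /rate -(ler_pM2l n_pos) mulrA mulfV ?gt_eqF // mul1r.
exact: expect_len_ge code.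
Qed.

Lemma achievable_ge_Hjg r : achievable P f g r -> Hjg P f g <= r.
Proof.
move=> [enc [dec [code rate_cvg]]]; apply: (cvgr_to_ge rate_cvg); near=> n.
by apply: rate_ge_Hjg (code n) _; near: n; exact: nbhs_infty_gt.
Unshelve. all: by end_near.
Qed.

Lemma rate_opt_le c n : (0 < n)%N ->
  rate P g (enc_opt P f g c (n := n)) <= Hjg P f g + (header_len c n).+1%:R / n%:R.
Proof.
move=> n_gt0; have n_pos : 0 < n%:R :> R by rewrite ltr0n.
rewrite /rate -(ler_pM2l n_pos) mulrA mulfV ?gt_eqF // mul1r mulrDr mulrCA mulfV ?gt_eqF //.
by rewrite mulr1 addrC; exact: expect_len_opt.
Qed.

Lemma achievable_Hjg : achievable P f g (Hjg P f g).
Proof.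
have [x0] := inhabited_of_sum1.
have [c q_bound] : exists c : nat, forall x y, - log2 (q P f g x (g y)) <= c%:R.
  have [c bound] := bounded_by_nat (fun p : X * Y => - log2 (q P f g p.1 (g p.2))).
  by exists c => x y; exact: bound (x, y).
exists (fun n => enc_opt P f g c (n := n)), (fun n => dec_opt P f g x0 c (n := n)).
split=> [n|]; first exact: (zero_error_code_opt P_pos x0 q_bound n).
apply: (@squeeze_cvgr _ _ _ _ (cst (Hjg P f g))
          (fun n => Hjg P f g + (header_len c n).+1%:R / n%:R)).
- near=> n; have n_gt0 : (0 < n)%N by near: n; exact: nbhs_infty_gt.
  rewrite rate_opt_le // andbT.
  exact: (rate_ge_Hjg (zero_error_code_opt P_pos x0 q_bound n) n_gt0).
- exact: (cvg_cst (Hjg P f g)).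
- by rewrite -[X in _ --> X]addr0; apply: cvgD; [exact: cvg_cst | exact: header_rate_cvg0].
Unshelve. all: by end_near.
Qed.

End Optimality.

Theorem theorem3 (R : realType) (X Y U Z : finType)
  (P : X -> Y -> R) (f : X -> Y -> U) (g : Y -> Z)
  (P_pos : forall x y, 0 < P x y)
  (P_sum1 : \sum_(x : X) \sum_(y : Y) P x y = 1) :
  opt_rate P f g =
  cond_entropy P (fun x y => jfun f g x (g y)) (fun _ y => g y).
Proof.
have achievable := achievable_Hjg f g P_pos P_sum1.
have lower := achievable_ge_Hjg P_pos P_sum1.
rewrite cond_entropy_jfun; apply/eqP; rewrite eq_le; apply/andP; split.
  by apply: (ge_inf _ achievable); exists (Hjg P f g) => r; exact: lower.
by apply: lb_le_inf => [|r]; [exists (Hjg P f g) | exact: lower].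
Qed.
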